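(* Let $k\ge1$, let $(A,t)$ be a $\mathcal{C}_k$-algebra, $a\in A$ and $H\subseteq A$. Then: (i) $D(a)=\big[\bigwedge_{j=1}^{k}t^j(\triangle a)\big)$, the principal lattice filter generated by $\bigwedge_{j=1}^{k}t^j(\triangle a)$; (ii) $D(H\cup\{a\})=\{x\in A: a\rightharpoondown x\in D(H)\}$; (iii) $D(a)=\{x\in A: a\rightharpoondown x=1\}$.
   Context: A modal pseudocomplemented De Morgan algebra ($mpM$-algebra) is an algebra $\langle A,\wedge,\vee,\sim,{}^\ast,0,1\rangle$ such that $\langle A,\wedge,\vee,\sim,0,1\rangle$ is a De Morgan algebra (bounded distributive lattice with $\sim\sim x=x$, $\sim(x\vee y)=\sim x\wedge\sim y$), $x^\ast$ is the pseudocomplement of $x$, and $x\vee\sim x\le x\vee x^\ast$. Put $\nabla x=\sim(\sim x\wedge x^\ast)$, $\triangle x=\sim\nabla\sim x$. A $\mathcal{C}_k$-algebra ($k\ge1$) is a pair $(A,t)$ with $A$ an $mpM$-algebra and $t$ an $mpM$-automorphism of $A$ with $t^k=\mathrm{id}$. The cyclic implication is $a\rightharpoondown b=\bigvee_{i=1}^{k}\nabla(\sim t^i(a))\vee b$. A cyclic deductive system is a set $D\subseteq A$ with $1\in D$ such that $x,\,x\rightharpoondown y\in D$ imply $y\in D$. For $H\subseteq A$, $D(H)$ denotes the smallest cyclic deductive system containing $H$, and $D(a)=D(\{a\})$. *)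

(* the carrier of an mpM-algebra is a bounded distributive
   lattice (mathcomp's tbDistrLatticeType), equipped with a De Morgan
   negation [neg] and a pseudocomplement [star]. *)
From mathcomp Require Import all_boot all_order.
Set Implicit Arguments. Unset Strict Implicit. Unset Printing Implicit Defensive.
Import Order.TTheory.
Local Open Scope order_scope.

Section Defs.
Context {d : Order.disp_t} {A : tbDistrLatticeType d}.

Definition is_mpM (neg star : A -> A) : Prop :=
  [/\ (forall x, neg (neg x) = x),
      (forall x y, neg (x `|` y) = neg x `&` neg y),
      (forall x y, x `&` y = \bot <-> y <= star x)
    & (forall x, x `|` neg x <= x `|` star x)].

Definition nabla (neg star : A -> A) (x : A) : A := neg (neg x `&` star x).
Definition delta (neg star : A -> A) (x : A) : A := neg (nabla neg star (neg x)).

Definition is_mpM_aut (neg star t : A -> A) : Prop :=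
  bijective t /\
  (forall x y, t (x `&` y) = t x `&` t y) /\
  (forall x y, t (x `|` y) = t x `|` t y) /\
  (forall x, t (neg x) = neg (t x)) /\
  (forall x, t (star x) = star (t x)) /\
  t \bot = \bot /\ t \top = \top.

Definition is_Ck_alg (k : nat) (neg star t : A -> A) : Prop :=
  [/\ is_mpM neg star, is_mpM_aut neg star t & forall x, iter k t x = x].

Definition cimp (k : nat) (neg star t : A -> A) (a b : A) : A :=
  (\join_(1 <= i < k.+1) nabla neg star (neg (iter i t a))) `|` b.

Definition cyclic_ds (k : nat) (neg star t : A -> A) (D : A -> Prop) : Prop :=
  D \top /\ (forall x y, D x -> D (cimp k neg star t x y) -> D y).

Definition Dgen (k : nat) (neg star t : A -> A) (H : A -> Prop) (x : A) : Prop :=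
  forall D, cyclic_ds k neg star t D -> (forall y, H y -> D y) -> D x.

End Defs.

From mathcomp Require Import all_boot all_order.
Import Order.TTheory.
Local Open Scope order_scope.

(* Write [cdelta x] for the element  /\_{j=1}^{k} t^j(delta x).  The whole
   lemma rests on two facts about it:
   - [cdelta x] is complemented (its De Morgan negation is a Boolean
     complement), because each [delta x] is and complemented elements are
     stable under meets and under the automorphism t;
   - the cyclic implication is material implication from [cdelta a]:
     a -> b = neg (cdelta a) \/ b, by De Morgan duality applied to the join
     defining it.
   Hence a cyclic deductive system is a lattice filter closed under
   x |-> cdelta x.  Part (i) follows: the principal filter [cdelta a) is
   such a system, and every such system containing a contains it.  Part (iii)
   is (i) rewritten with  m <= x  <->  neg m \/ x = top  for complemented m.
   Part (ii) is a deduction theorem: the preimage of a deductive system under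
   x |-> (a -> x) is again a deductive system; the key inequality is
   cdelta (neg m \/ u) /\ m <= cdelta u  for a t-invariant complemented m. *)

Section CyclicDeduction.
Context {d : Order.disp_t} {A : tbDistrLatticeType d}.
Implicit Types (x y u v b c m : A).

Variable neg : A -> A.
Hypothesis negK : forall x, neg (neg x) = x.
Hypothesis negU : forall x y, neg (x `|` y) = neg x `&` neg y.

Lemma negI x y : neg (x `&` y) = neg x `|` neg y.
Proof. by rewrite -{1}(negK x) -{1}(negK y) -negU negK. Qed.

Lemma neg_anti {x y} : x <= y -> neg y <= neg x.
Proof. by move=> /join_idPr h; rewrite -h negU leIl. Qed.

Lemma neg0 : neg \bot = \top.
Proof.
apply/le_anti; rewrite lex1 /= -{1}(negK \top); apply: neg_anti; exact: le0x.
Qed.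

Lemma neg1 : neg \top = \bot.
Proof. by rewrite -neg0 negK. Qed.

Lemma le0_eq0 x : x <= \bot -> x = \bot.
Proof. by move=> h; apply/le_anti; rewrite h le0x. Qed.

Lemma ge1_eq1 x : \top <= x -> x = \top.
Proof. by move=> h; apply/le_anti; rewrite h lex1. Qed.

Definition complemented b := b `&` neg b = \bot /\ b `|` neg b = \top.

Lemma complemented_le b x : complemented b -> (b <= x) <-> (neg b `|` x = \top).
Proof.
case=> h1 h2; split.
- move=> hb; apply/ge1_eq1; rewrite -h2 leUx (le_trans hb (leUr _ _)) leUl //.
- move=> h; have: b = b `&` (neg b `|` x) by rewrite h meetx1.
  rewrite meetUr h1 join0x => ->; exact: leIr.
Qed.

Lemma complemented_mp b x : complemented b -> b `&` (neg b `|` x) = b `&` x.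
Proof. by case=> h1 _; rewrite meetUr h1 join0x. Qed.

Lemma complementedI b c :
  complemented b -> complemented c -> complemented (b `&` c).
Proof.
case=> b1 b2 [c1 c2]; split.
- apply: le0_eq0; rewrite negI meetUr leUx; apply/andP; split.
  + by rewrite -b1; apply: leI2 (leIl _ _) (lexx _).
  + by rewrite -c1; apply: leI2 (leIr _ _) (lexx _).
- apply: ge1_eq1; rewrite negI joinIl lexI; apply/andP; split.
  + by rewrite -b2; apply: leU2 (lexx _) (leUl _ _).
  + by rewrite -c2; apply: leU2 (lexx _) (leUr _ _).
Qed.

Lemma complemented1 : complemented \top.
Proof. by rewrite /complemented neg1 meetx0 joinx0. Qed.

Variable star : A -> A.
Hypothesis starP : forall x y, x `&` y = \bot <-> y <= star x.

Lemma meet_star x : x `&` star x = \bot.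
Proof. by apply/starP. Qed.

Lemma star_anti {x y} : x <= y -> star y <= star x.
Proof.
move=> h; apply/starP; apply/le_anti; rewrite le0x andbT -(meet_star y).
exact: leI2.
Qed.

Lemma starU x y : star (x `|` y) = star x `&` star y.
Proof.
apply/le_anti; rewrite lexI !star_anti ?leUl ?leUr //=.
apply/starP; apply: le0_eq0; rewrite meetUl leUx; apply/andP; split.
- by rewrite -(meet_star x) meetA leIl.
- by rewrite -(meet_star y) meetCA leIr.
Qed.

Notation delta := (delta neg star).

Lemma deltaE x : delta x = x `&` star (neg x).
Proof. by rewrite /delta /nabla !negK. Qed.

Lemma delta_le x : delta x <= x.
Proof. by rewrite deltaE leIl. Qed.

Lemma delta_mono x y : x <= y -> delta x <= delta y.
Proof. by move=> h; rewrite !deltaE leI2 // star_anti // neg_anti. Qed.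

Lemma deltaI x y : delta (x `&` y) = delta x `&` delta y.
Proof. by rewrite !deltaE negI starU meetACA. Qed.

(* delta fixes complemented elements: there neg is the pseudocomplement. *)
Lemma delta_complemented b : complemented b -> delta b = b.
Proof. by case=> h1 _; rewrite deltaE; apply/meet_l/starP; rewrite meetC. Qed.

Hypothesis mpM_ax : forall x, x `|` neg x <= x `|` star x.

(* Every [delta a] is complemented; this is where the mpM axiom enters. *)
Lemma complemented_delta a : complemented (delta a).
Proof.
rewrite deltaE; set y := star (neg a).
have f1 : neg a `&` y = \bot by exact: meet_star.
have h3 : neg a `|` a <= neg a `|` y by have := mpM_ax (neg a); rewrite negK.
have f2 : a `&` neg y <= a `&` neg a by have := neg_anti h3; rewrite !negU negK.
have g : a `|` (neg a `|` neg y) = \top.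
  rewrite -(negK (_ `|` _)) !negU !negK.
  have -> : neg a `&` (a `&` y) = \bot.
    by apply: le0_eq0; rewrite -f1 meetCA leIr.
  exact: neg0.
split.
- apply: le0_eq0; rewrite negI meetUr leUx; apply/andP; split.
  + rewrite -f1 lexI leIr /=; exact: le_trans (leIl _ _) (leIr _ _).
  + rewrite meetAC -f1; apply: le_trans (leI2 f2 (lexx y)) _.
    exact: leI2 (leIr _ _) (lexx _).
- apply: ge1_eq1; rewrite negI joinIl lexI -g; apply/andP; split => //.
  rewrite leUx leUr andbT.
  apply: (le_trans (leUr a (neg a))); apply: (le_trans h3).
  rewrite leUx leUl andbT; apply: (le_trans _ (leUr _ _)); exact: leUl.
Qed.

Variable t : A -> A.
Hypothesis tI : forall x y, t (x `&` y) = t x `&` t y.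
Hypothesis tU : forall x y, t (x `|` y) = t x `|` t y.
Hypothesis tN : forall x, t (neg x) = neg (t x).
Hypothesis tS : forall x, t (star x) = star (t x).
Hypothesis t0 : t \bot = \bot.
Hypothesis t1 : t \top = \top.

Lemma iterN j x : iter j t (neg x) = neg (iter j t x).
Proof. by elim: j => //= j ->; rewrite tN. Qed.
Lemma iterS j x : iter j t (star x) = star (iter j t x).
Proof. by elim: j => //= j ->; rewrite tS. Qed.
Lemma iterI j x y : iter j t (x `&` y) = iter j t x `&` iter j t y.
Proof. by elim: j => //= j ->; rewrite tI. Qed.
Lemma iterU j x y : iter j t (x `|` y) = iter j t x `|` iter j t y.
Proof. by elim: j => //= j ->; rewrite tU. Qed.
Lemma iter0 j : iter j t \bot = \bot.
Proof. by elim: j => //= j ->; rewrite t0. Qed.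
Lemma iter1 j : iter j t \top = \top.
Proof. by elim: j => //= j ->; rewrite t1. Qed.

Lemma iter_mono j {x y} : x <= y -> iter j t x <= iter j t y.
Proof. by move=> /meet_idPl h; apply/meet_idPl; rewrite -iterI h. Qed.

Lemma complemented_iter j b : complemented b -> complemented (iter j t b).
Proof.
by case=> h1 h2; rewrite /complemented -iterN -iterI -iterU h1 h2 iter0 iter1.
Qed.

Lemma iter_delta j x : iter j t (delta x) = delta (iter j t x).
Proof. by rewrite !deltaE iterI iterS iterN. Qed.

Variable k : nat.
Hypothesis k_gt0 : (0 < k)%N.
Hypothesis tk : forall x, iter k t x = x.

Definition cdelta x := \meet_(1 <= j < k.+1) iter j t (delta x).

Lemma cdelta_le_iter x j : (1 <= j <= k)%N -> cdelta x <= iter j t (delta x).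
Proof. by move=> hj; apply: meets_inf_seq => //; rewrite mem_index_iota ltnS. Qed.

Lemma cdelta_le x : cdelta x <= x.
Proof.
apply: le_trans (cdelta_le_iter x k _) _; first by rewrite k_gt0 leqnn.
rewrite tk; exact: delta_le.
Qed.

Lemma complemented_cdelta x : complemented (cdelta x).
Proof.
apply: big_ind; [exact: complemented1 | exact: complementedI |].
move=> i _; apply: complemented_iter; exact: complemented_delta.
Qed.

(* t permutes the factors t^1, ..., t^k cyclically. *)
Lemma t_cdelta x : t (cdelta x) = cdelta x.
Proof.
rewrite /cdelta (big_morph t tI t1).
rewrite big_nat_recr // big_nat_recl //= -/(iter k.+1 t _).
by rewrite iterSr tk meetC.
Qed.

Lemma iter_cdelta j x : iter j t (cdelta x) = cdelta x.
Proof. by elim: j => //= j ->; rewrite t_cdelta. Qed.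

Lemma cdelta_mono x y : x <= y -> cdelta x <= cdelta y.
Proof.
move=> h; apply/meetsP_seq => j; rewrite mem_index_iota ltnS => hj _.
apply: (le_trans (cdelta_le_iter x j hj)); apply: iter_mono; exact: delta_mono.
Qed.

Lemma cdelta_idem x : cdelta (cdelta x) = cdelta x.
Proof.
apply/le_anti; rewrite cdelta_le /=; apply/meetsP_seq => j _ _.
by rewrite delta_complemented ?iter_cdelta //; exact: complemented_cdelta.
Qed.

Lemma cdelta_cancel m x : complemented m -> (forall j, iter j t m = m) ->
  cdelta (neg m `|` x) `&` m <= cdelta x.
Proof.
move=> cm hm; apply/meetsP_seq => j; rewrite mem_index_iota ltnS => hj _.
apply: (le_trans (leI2 (cdelta_le_iter _ j hj) (lexx m))).
rewrite -{2}(hm j) -iterI; apply: iter_mono.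
rewrite -{2}(delta_complemented _ cm) -deltaI; apply: delta_mono.
by rewrite meetC complemented_mp // leIr.
Qed.

Notation cimp := (cimp k neg star t).
Notation cyclic_ds := (cyclic_ds k neg star t).
Notation Dgen := (Dgen k neg star t).

Lemma cimpE a b : cimp a b = neg (cdelta a) `|` b.
Proof.
rewrite /cimp /cdelta (big_morph neg negI neg1); congr (_ `|` _).
by apply: eq_bigr => i _; rewrite /nabla negK iter_delta deltaE.
Qed.

Lemma cimp_true a x : cimp a x = \top <-> cdelta a <= x.
Proof. by rewrite cimpE; apply: iff_sym; exact: complemented_le (complemented_cdelta a). Qed.

Lemma cimp_refl a : cimp a a = \top.
Proof. by apply/cimp_true; exact: cdelta_le. Qed.

Section DeductiveSystem.
Variable D : A -> Prop.
Hypothesis hD : cyclic_ds D.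

Lemma ds_top : D \top.
Proof. by case: hD. Qed.

Lemma ds_mp {x y} : D x -> D (cimp x y) -> D y.
Proof. by case: hD => _; apply. Qed.

Lemma ds_up {x y} : D x -> x <= y -> D y.
Proof.
move=> hx hxy; apply: (ds_mp hx).
have -> : cimp x y = \top by apply/cimp_true; exact: le_trans (cdelta_le x) hxy.
exact: ds_top.
Qed.

Lemma ds_cdelta {x} : D x -> D (cdelta x).
Proof.
move=> hx; apply: (ds_mp hx); rewrite cimpE.
by case: (complemented_cdelta x) => _ h; rewrite joinC h; exact: ds_top.
Qed.

End DeductiveSystem.
Arguments ds_top {D} hD.
Arguments ds_mp {D} hD {x y}.
Arguments ds_up {D} hD {x y}.
Arguments ds_cdelta {D} hD {x}.

Lemma Dgen_ds H : cyclic_ds (Dgen H).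
Proof.
split; first by move=> D [hD _] _.
by move=> x y hx hxy D hD hH; exact: hD.2 x y (hx D hD hH) (hxy D hD hH).
Qed.

Lemma Dgen_in (H : A -> Prop) y : H y -> Dgen H y.
Proof. by move=> hy D _ hH; apply: hH. Qed.

Lemma Dgen_mono (H H' : A -> Prop) x :
  (forall y, H y -> H' y) -> Dgen H x -> Dgen H' x.
Proof. by move=> sub hx D hD hH'; apply: hx => // y /sub; apply: hH'. Qed.

Lemma principal_filter_ds x : cyclic_ds (fun z => cdelta x <= z).
Proof.
split; first exact: lex1.
move=> u v hu; rewrite cimpE => huv.
have hxu : cdelta x <= cdelta u by rewrite -cdelta_idem; exact: cdelta_mono.
have : cdelta x <= cdelta u `&` (neg (cdelta u) `|` v) by rewrite lexI hxu.
rewrite complemented_mp; last exact: complemented_cdelta.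
by move=> h; exact: le_trans h (leIr _ _).
Qed.

Lemma Dgen_single a x : Dgen (fun y => y = a) x <-> cdelta a <= x.
Proof.
split.
- by move=> hx; apply: hx (principal_filter_ds a) _ => y ->; exact: cdelta_le.
- have G := Dgen_ds (fun y => y = a).
  move=> hx; apply: (ds_up G _ hx).
  exact: (ds_cdelta G (Dgen_in (eq^~ a) a erefl)).
Qed.

Lemma cimp_preimage_ds D a : cyclic_ds D -> cyclic_ds (fun z => D (cimp a z)).
Proof.
move=> hD; split; first by rewrite cimpE joinx1; exact: ds_top.
move=> u v; rewrite !cimpE => hu huv; apply: (ds_mp hD hu); rewrite cimpE.
apply: (ds_up hD huv); set m := cdelta a.
have cancel : neg (cdelta u) <= neg (cdelta (neg m `|` u)) `|` neg m.
  rewrite -negI; apply: neg_anti.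
  exact: cdelta_cancel _ u (complemented_cdelta a) (iter_cdelta ^~ a).
by rewrite !joinA; apply: leU2 => //; rewrite leUx leUr cancel.
Qed.

Lemma deduction (H : A -> Prop) a x :
  Dgen (fun y => H y \/ y = a) x <-> Dgen H (cimp a x).
Proof.
split.
- move=> hx; apply: (hx _ (cimp_preimage_ds _ a (Dgen_ds H))) => y [hy|->].
  + by apply: (ds_up (Dgen_ds H) (Dgen_in _ _ hy)); rewrite cimpE leUr.
  + by rewrite cimp_refl; exact: ds_top (Dgen_ds H).
- move=> hx; have G := Dgen_ds (fun y => H y \/ y = a).
  apply: (ds_mp G (x := a)); first by apply: Dgen_in; right.
  by apply: Dgen_mono hx => y hy; left.
Qed.

End CyclicDeduction.

Theorem lemma4p1 (k : nat) (hk : (1 <= k)%N) (d : Order.disp_t)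
  (A : tbDistrLatticeType d) (neg star t : A -> A)
  (hA : is_Ck_alg k neg star t) (a : A) (H : A -> Prop) :
  (forall x, Dgen k neg star t (fun y => y = a) x <->
     (\meet_(1 <= j < k.+1) (iter j t (delta neg star a)) <= x)%O) /\
  (forall x, Dgen k neg star t (fun y => H y \/ y = a) x <->
     Dgen k neg star t H (cimp k neg star t a x)) /\
  (forall x, Dgen k neg star t (fun y => y = a) x <->
     cimp k neg star t a x = \top).
Proof.
case: hA => [[negK negU starP mpM_ax] [_ [tI [tU [tN [tS [t0 t1]]]]]] tk].
have part_i := Dgen_single _ negK negU _ starP mpM_ax _ tI tU tN tS t0 t1 _ hk tk a.
split; first exact: part_i.
split; first exact: deduction _ negK negU _ starP mpM_ax _ tI tU tN tS t0 t1 _ hk tk H a.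
move=> x; have part_iii := cimp_true _ negK negU _ starP mpM_ax _ tI tU tN tS t0 t1 _ a x.
by split => [/part_i/part_iii | /part_iii/part_i].
Qed.
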